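(* Let $G$ be an abelian group and $\{a_i\}_{i\ge0}$ an infinite sequence of elements of $G$. If $\{a_i-a_0\mid i\ge1\}$ is linearly independent in $G$, then there exists $N\ge0$ such that $\{a_i\mid i>N\}$ is linearly independent in $G$.
   Context: A family $\{x_i\}$ of elements of an abelian group is linearly independent if $\sum_i c_ix_i=0$ with $c_i\in\mathbb{Z}$, only finitely many nonzero, implies all $c_i=0$. *)

From mathcomp Require Import all_boot all_order all_algebra.
Set Implicit Arguments. Unset Strict Implicit. Unset Printing Implicit Defensive.
Import GRing.Theory.
Local Open Scope ring_scope.

Definition lin_indep (G : zmodType) (P : pred nat) (x : nat -> G) : Prop :=
  forall (s : seq nat) (c : nat -> int),
    uniq s -> all P s ->
    \sum_(i <- s) x i *~ c i = 0 ->
    forall i, i \in s -> c i = 0.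

From mathcomp Require Import all_boot all_order all_algebra.
From Stdlib Require Import Classical.
Set Implicit Arguments. Unset Strict Implicit. Unset Printing Implicit Defensive.
Import GRing.Theory.
Local Open Scope ring_scope.

(* Put b_i = a_i - a_0, so that sum_i c_i a_i = sum_i c_i b_i + (sum_i c_i) a_0.
   If no nonzero multiple of a_0 is an integer combination of the b_i, a
   vanishing combination of the a_i must have sum_i c_i = 0, hence all c_i = 0,
   and N = 0 works.  Otherwise m a_0 = sum_{j in S} d_j b_j with m <> 0; for
   N = max S, multiplying a relation sum_{i > N} c_i a_i = 0 by m turns it into
   a relation among the b_i over the disjoint index sets S and {i > N}, so
   every m c_i vanishes. *)

Definition multiple_in_span (G : zmodType) (P : pred nat) (x : nat -> G)
    (y : G) (s : seq nat) : Prop :=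
  exists (m : int) (d : nat -> int),
    [/\ m != 0, uniq s, all P s & y *~ m = \sum_(i <- s) x i *~ d i].

Lemma sum_mulrz_recenter (G : zmodType) (x : nat -> G) (x0 : G)
    (s : seq nat) (c : nat -> int) :
  \sum_(i <- s) x i *~ c i =
  \sum_(i <- s) (x i - x0) *~ c i + x0 *~ (\sum_(i <- s) c i).
Proof.
rewrite mulrz_sumr -big_split /=; apply: eq_bigr => i _.
by rewrite -mulrzDl subrK.
Qed.

Lemma lin_indep_disjoint_sum (G : zmodType) (P : pred nat) (x : nat -> G)
    (s t : seq nat) (c d : nat -> int) :
  lin_indep P x -> uniq s -> uniq t -> all P s -> all P t ->
  ~~ has (mem s) t ->
  \sum_(i <- s) x i *~ c i + \sum_(i <- t) x i *~ d i = 0 ->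
  {in t, forall i, d i = 0}.
Proof.
move=> indep us ut Ps Pt st_disj rel i ti.
pose e j := if j \in t then d j else c j.
have -> : d i = e i by rewrite /e ti.
apply: (indep (s ++ t)); rewrite ?mem_cat ?ti ?orbT //.
- by rewrite cat_uniq us ut st_disj.
- by rewrite all_cat Ps Pt.
rewrite big_cat /= -[RHS]rel; congr (_ + _); apply: eq_big_seq => j js; last first.
  by rewrite /e js.
have /negbTE jt : j \notin t by apply: contra st_disj => jt; apply/hasP; exists j.
by rewrite /e jt.
Qed.

Section ShiftedFamily.

Variables (G : zmodType) (a : nat -> G).

Let b i := a i - a 0%N.

Hypothesis b_indep : lin_indep (fun i => 0 < i)%N b.

Lemma lin_indep_of_no_multiple_in_span :
  (forall s, ~ multiple_in_span (fun i => 0 < i)%N b (a 0%N) s) ->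
  lin_indep (fun i => 0 < i)%N a.
Proof.
move=> no_mult s c us Ps rel.
have sum_c0 : \sum_(i <- s) c i = 0.
  apply/eqP/negPn/negP => sum_c_neq0; apply: (no_mult s).
  exists (\sum_(i <- s) c i), (fun i => - c i); split=> //.
  rewrite (eq_bigr (fun i => - (b i *~ c i))) ?sumrN => [|i _]; last exact: mulrNz.
  by apply/eqP; rewrite -addr_eq0 addrC -(@sum_mulrz_recenter _ _ (a 0%N)) rel.
apply: (b_indep us Ps).
by move: rel; rewrite (@sum_mulrz_recenter _ a (a 0%N)) sum_c0 mulr0z addr0.
Qed.

Lemma lin_indep_tail_of_multiple_in_span (s0 : seq nat) :
  multiple_in_span (fun i => 0 < i)%N b (a 0%N) s0 ->
  lin_indep (fun i => \max_(j <- s0) j < i)%N a.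
Proof.
case=> m [d [m_neq0 us0 Ps0 ma0]] s c us Ps rel i si.
set C := \sum_(j <- s) c j.
have Ps' : all (fun i => 0 < i)%N s.
  by apply/allP => j /(allP Ps); apply: leq_ltn_trans.
have disj : ~~ has (mem s0) s.
  apply/hasPn => j /(allP Ps) /= lt_max_j; apply: contraL lt_max_j => j0.
  by rewrite -leqNgt (leq_bigmax_seq (F := id) j j0).
have : \sum_(j <- s0) b j *~ (d j * C) + \sum_(j <- s) b j *~ (c j * m) = 0.
  under eq_bigr do rewrite mulrzA; under [X in _ + X]eq_bigr do rewrite mulrzA.
  rewrite -!mulrz_suml -ma0 mulrzAC -mulrzDl addrC.
  by rewrite -(@sum_mulrz_recenter _ _ (a 0%N)) rel mul0rz.
move/(lin_indep_disjoint_sum b_indep us0 us Ps0 Ps' disj)/(_ i si)/eqP.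
by rewrite mulf_eq0 (negbTE m_neq0) orbF => /eqP.
Qed.

End ShiftedFamily.

Theorem lemmaA4 (G : zmodType) (a : nat -> G) :
  lin_indep (fun i => (1 <= i)%N) (fun i => a i - a 0%N) ->
  exists N : nat, lin_indep (fun i => (N < i)%N) a.
Proof.
move=> b_indep.
have [[s0 mult] | no_mult] := classic (exists s0,
  multiple_in_span (fun i => 0 < i)%N (fun i => a i - a 0%N) (a 0%N) s0).
- by exists (\max_(j <- s0) j)%N; apply: lin_indep_tail_of_multiple_in_span mult.
- exists 0%N; apply: lin_indep_of_no_multiple_in_span => // s mult.
  by apply: no_mult; exists s.
Qed.
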